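(* Let $\mathcal K$ be an abstract Krivine structure, and let $\mathsf E=\mathsf S(\mathsf K(\mathsf S\mathsf K\mathsf K))$. For all $P\subseteq\Pi$ and $L\subseteq\Lambda$: (1) $\mathsf E\mathsf E\perp\rho$ for every $\rho\in {}^\perp P\leadsto_\bullet\big(L\leadsto_\bullet(P\,\clubsuit\,L)\big)$; (2) $P\,\clubsuit\,L\subseteq(\{\mathsf E\mathsf E\}^\perp\ast_\bullet{}^\perp P)\ast_\bullet L\subseteq\big(\{\mathsf E\mathsf E t:t\in{}^\perp P\}\big)^\perp\ast_\bullet L$.
   Context: An abstract Krivine structure $\mathcal K$ consists of sets $\Lambda$ (terms), $\Pi$ (stacks), a relation $\perp\subseteq\Lambda\times\Pi$ (write $t\perp\pi$), a map $\mathrm{push}:\Lambda\times\Pi\to\Pi$ written $t\cdot\pi$ (associating to the right: $t\cdot s\cdot\pi=t\cdot(s\cdot\pi)$), a map $\mathrm{app}:\Lambda\times\Lambda\to\Lambda$ written $ts$ (associating to the left), a subset $\mathrm{QP}\subseteq\Lambda$ closed under application, and $\mathsf K,\mathsf S\in\mathrm{QP}$ such that for all $t,s,u\in\Lambda$, $\pi\in\Pi$: (a) $t\perp s\cdot\pi$ implies $ts\perp\pi$; (b) $t\perp\pi$ implies $\mathsf K\perp t\cdot s\cdot\pi$; (c) $tu(su)\perp\pi$ implies $\mathsf S\perp t\cdot s\cdot u\cdot\pi$. Polars: $L^\perp=\{\pi:\forall t\in L,\ t\perp\pi\}$, ${}^\perp P=\{t:\forall\pi\in P,\ t\perp\pi\}$;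 $\overline P=({}^\perp P)^\perp$; $\widehat P=\bigcup_{\pi\in P}\overline{\{\pi\}}$. For $L\subseteq\Lambda$, $P\subseteq\Pi$: $L\leadsto P=\{t\cdot\pi:t\in L,\pi\in P\}$, $L\leadsto_\bullet P=\widehat{L\leadsto P}$, $P\ast_\bullet L=\{\pi: t\cdot\pi'\in P\ \forall t\in L,\ \pi'\in\overline{\{\pi\}}\}$, $P\,\clubsuit\,L=(\{t\ell:t\in{}^\perp P,\ \ell\in L\})^\perp$. *)

Set Implicit Arguments.

Record AKS := {
  Lam : Type;
  Pi : Type;
  perp : Lam -> Pi -> Prop;
  push : Lam -> Pi -> Pi;
  app : Lam -> Lam -> Lam;
  QP : Lam -> Prop;
  QP_app : forall t s, QP t -> QP s -> QP (app t s);
  cK : Lam;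
  cS : Lam;
  QP_K : QP cK;
  QP_S : QP cS;
  ax_push : forall t s pi, perp t (push s pi) -> perp (app t s) pi;
  ax_K : forall t s pi, perp t pi -> perp cK (push t (push s pi));
  ax_S : forall t s u pi, perp (app (app t u) (app s u)) pi ->
                          perp cS (push t (push s (push u pi)))
}.

Section Defs.
Variable K : AKS.

Definition lpolar (L : Lam K -> Prop) : Pi K -> Prop :=
  fun pi => forall t, L t -> perp K t pi.
Definition ppolar (P : Pi K -> Prop) : Lam K -> Prop :=
  fun t => forall pi, P pi -> perp K t pi.
Definition pclos (P : Pi K -> Prop) : Pi K -> Prop := lpolar (ppolar P).
Definition phat (P : Pi K -> Prop) : Pi K -> Prop :=
  fun rho => exists pi, P pi /\ pclos (fun x => x = pi) rho.
Definition arrow (L : Lam K -> Prop) (P : Pi K -> Prop) : Pi K -> Prop :=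
  fun rho => exists t pi, L t /\ P pi /\ rho = push K t pi.
Definition arrowb (L : Lam K -> Prop) (P : Pi K -> Prop) : Pi K -> Prop :=
  phat (arrow L P).
Definition astb (P : Pi K -> Prop) (L : Lam K -> Prop) : Pi K -> Prop :=
  fun pi => forall t pi', L t -> pclos (fun x => x = pi) pi' -> P (push K t pi').
Definition club (P : Pi K -> Prop) (L : Lam K -> Prop) : Pi K -> Prop :=
  lpolar (fun u => exists t l, ppolar P t /\ L l /\ u = app K t l).

Definition cE : Lam K :=
  app K (cS K) (app K (cK K) (app K (app K (cS K) (cK K)) (cK K))).

Definition subsetP (A B : Pi K -> Prop) : Prop := forall x, A x -> B x.

End Defs.
Arguments lpolar {K} L _.
Arguments ppolar {K} P _.
Arguments pclos {K} P _.
Arguments phat {K} P _.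
Arguments arrow {K} L P _.
Arguments arrowb {K} L P _.
Arguments astb {K} P L _.
Arguments club {K} P L _.
Arguments subsetP {K} A B.
Arguments cE K : clear implicits.


(* E = S (K (S K K)) satisfies: t s ⊥ pi implies E ⊥ t.s.pi, so E E t s
   runs to E t s and then to t s.  Both claims thus reduce to the defining
   property of P clubsuit L (t l is orthogonal to it for t in ^perp P and l in
   L); closures of singletons and hats are harmless, since a term orthogonal
   to pi is orthogonal to every stack in the closure of {pi}. *)

Section KrivineE.

Context {K : AKS}.

Lemma pclos1_refl (pi : Pi K) : pclos (fun x => x = pi) pi.
Proof. intros t Ht. now apply Ht. Qed.

Lemma perp_pclos1 {t : Lam K} {pi rho : Pi K} :
  perp K t pi -> pclos (fun x => x = pi) rho -> perp K t rho.
Proof. intros Htpi Hrho. apply Hrho. now intros x ->. Qed.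

Lemma ppolar_phat (P : Pi K -> Prop) (t : Lam K) :
  ppolar P t -> ppolar (phat P) t.
Proof. intros Ht rho [pi [Hpi Hrho]]. exact (perp_pclos1 (Ht pi Hpi) Hrho). Qed.

Lemma ppolar_arrowb (L : Lam K -> Prop) (P : Pi K -> Prop) (t : Lam K) :
  (forall l pi, L l -> P pi -> perp K t (push K l pi)) ->
  ppolar (arrowb L P) t.
Proof.
  intros Ht. apply ppolar_phat. intros rho [l [pi [Hl [Hpi ->]]]]. auto.
Qed.

Lemma astb_subset (P Q : Pi K -> Prop) (L : Lam K -> Prop) :
  subsetP P Q -> subsetP (astb P L) (astb Q L).
Proof. intros HPQ pi Hpi t pi' Ht Hpi'. exact (HPQ _ (Hpi t pi' Ht Hpi')). Qed.

Lemma astb_lpolar1 (u : Lam K) (L : Lam K -> Prop) :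
  subsetP (astb (lpolar (fun v => v = u)) L)
          (lpolar (fun v => exists t, L t /\ v = app K u t)).
Proof.
  intros pi Hpi v [t [Ht ->]]. apply ax_push.
  exact (Hpi t pi Ht (pclos1_refl pi) u eq_refl).
Qed.

Lemma club_perp {P : Pi K -> Prop} {L : Lam K -> Prop} {t l : Lam K} {sg : Pi K} :
  club P L sg -> ppolar P t -> L l -> perp K (app K t l) sg.
Proof. intros Hsg Ht Hl. apply Hsg. now exists t, l. Qed.

Lemma cE_perp (t s : Lam K) (pi : Pi K) :
  perp K (app K t s) pi -> perp K (cE K) (push K t (push K s pi)).
Proof.
  intros H. unfold cE.
  apply ax_push, ax_S, ax_push, ax_push, ax_push, ax_K.
  apply ax_push, ax_push, ax_S, ax_push, ax_push, ax_K.
  exact H.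
Qed.

Lemma cE_app_perp (t s : Lam K) (pi : Pi K) :
  perp K (app K t s) pi -> perp K (app K (cE K) t) (push K s pi).
Proof. intros H. now apply ax_push, cE_perp. Qed.

Lemma cEcE_perp (t : Lam K) (pi : Pi K) :
  perp K (app K (cE K) t) pi -> perp K (app K (cE K) (cE K)) (push K t pi).
Proof. intros H. now apply ax_push, cE_perp. Qed.

End KrivineE.

Theorem mainTheorem5 (K : AKS) (P : Pi K -> Prop) (L : Lam K -> Prop) :
  (forall rho,
     arrowb (ppolar P) (arrowb L (club P L)) rho ->
     perp K (app K (cE K) (cE K)) rho)
  /\
  (subsetP (club P L)
     (astb (astb (lpolar (fun u => u = app K (cE K) (cE K))) (ppolar P)) L)
   /\
   subsetP
     (astb (astb (lpolar (fun u => u = app K (cE K) (cE K))) (ppolar P)) L)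
     (astb (lpolar (fun u => exists t, ppolar P t /\ u = app K (app K (cE K) (cE K)) t)) L)).
Proof.
  split; [|split].
  - apply ppolar_arrowb. intros t pi Ht Hpi.
    apply cEcE_perp. revert pi Hpi. apply ppolar_arrowb. intros l sg Hl Hsg.
    apply cE_app_perp. exact (club_perp Hsg Ht Hl).
  - intros sg Hsg l pi Hl Hpi t rho Ht Hrho u ->.
    apply cEcE_perp. apply (perp_pclos1 (pi := push K l pi)); [|exact Hrho].
    apply cE_app_perp. exact (perp_pclos1 (club_perp Hsg Ht Hl) Hpi).
  - apply astb_subset, astb_lpolar1.
Qed.
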